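(* Let $\lambda, \mu, \nu$ be real numbers with $\mu > -1$ and let $$\mathcal{H}_{\lambda,\mu,\nu}(a)(n) = \sum_{m=1}^{\infty} \frac{m^{\mu} n^{\nu}}{(m+n)^{\lambda}} a_m, \quad n \in \mathbb{N}.$$ Then $\mathcal{H}_{\lambda,\mu,\nu}$ is bounded from $l^\infty$ to $l^\infty$ if and only if $$\lambda \geq \mu + \nu + 1 \quad\text{and}\quad \lambda > \mu + 1.$$
   Context: $l^\infty$ is the space of real sequences $a=\{a_m\}_{m\ge1}$ with $\|a\|_\infty = \sup_{m\in\mathbb{N}} |a_m| < \infty$. Bounded means: for every $a \in l^\infty$ the defining series converge, the image lies in $l^\infty$, and $\|\mathcal{H}_{\lambda,\mu,\nu} a\|_\infty \le C\|a\|_\infty$ for a constant $C$ independent of $a$. *)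

From Stdlib Require Import Reals.
From Coquelicot Require Import Coquelicot.
Open Scope R_scope.

(* Sequences a = (a_m)_{m>=1} are modelled as a : nat -> R; the value a 0 is
   ignored (indices m, n range over 1, 2, 3, ...). *)

Definition Hkernel (lambda mu nu : R) (m n : nat) : R :=
  Rpower (INR m) mu * Rpower (INR n) nu / Rpower (INR (m + n)) lambda.

(* the series  sum_{m>=1} kernel(m,n) a_m ; term k corresponds to m = k+1 *)
Definition Hterm (lambda mu nu : R) (a : nat -> R) (n : nat) (k : nat) : R :=
  Hkernel lambda mu nu (S k) n * a (S k).

Definition H_bounded_linf (lambda mu nu : R) : Prop :=
  exists C : R, forall (a : nat -> R) (M : R),
    (forall m : nat, (1 <= m)%nat -> Rabs (a m) <= M) ->
    forall n : nat, (1 <= n)%nat ->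
      ex_series (Hterm lambda mu nu a n) /\
      Rabs (Series (Hterm lambda mu nu a n)) <= C * M.

From Stdlib Require Import Reals Lra Lia.
From Coquelicot Require Import Coquelicot.
Open Scope R_scope.

(* The kernel is positive, so boundedness on l^oo amounts to a uniform bound on the
   row sums  sum_m m^mu n^nu (m+n)^(-lambda).  Since (m+n)^lambda >= max(m,n)^lambda, the
   part m <= n of a row is at most n^(nu-lambda) sum_(m<=n) m^mu, which is O(n^(mu+nu+1-lambda))
   because mu > -1, and the part m > n is at most n^nu sum_(m>n) m^(mu-lambda), which is
   O(n^(mu+nu+1-lambda)) when lambda > mu+1; the power sums are compared with integrals through
   the tangent-line inequality for exp.  Conversely, when lambda <= mu+1 the first row dominates
   a multiple of the harmonic series, and the terms n < m <= 2n of the n-th row add up to a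
   multiple of n^(mu+nu+1-lambda), unbounded when lambda < mu+nu+1. *)

Lemma exp_le_compat x y : x <= y -> exp x <= exp y.
Proof. intros [Hlt | ->]; [left; apply exp_increasing |]; lra. Qed.

Lemma Rpower_pos x p : 0 < Rpower x p.
Proof. apply exp_pos. Qed.

Lemma Rpower_1_base p : Rpower 1 p = 1.
Proof. unfold Rpower. rewrite ln_1, Rmult_0_r. apply exp_0. Qed.

Lemma Rpower_sub x p p' : Rpower x (p - p') = Rpower x p / Rpower x p'.
Proof. unfold Rminus, Rdiv. rewrite Rpower_plus, Rpower_Ropp. reflexivity. Qed.

Lemma Rpower_sub_1 x p : 0 < x -> Rpower x (p - 1) = Rpower x p / x.
Proof. intros Hx. rewrite Rpower_sub, Rpower_1; auto. Qed.

Lemma Rpower_le_1 x p : 1 <= x -> p <= 0 -> Rpower x p <= 1.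
Proof. intros Hx Hp. rewrite <- (Rpower_O x) by lra. apply Rle_Rpower; assumption. Qed.

Lemma ln_sub_le x y : 0 < x -> 0 < y -> ln y - ln x <= (y - x) / x.
Proof.
  intros Hx Hy. pose proof (exp_ineq1_le (ln (y / x))) as H.
  rewrite exp_ln, ln_div in H by (try apply Rdiv_lt_0_compat; assumption).
  replace ((y - x) / x) with (y / x - 1) by (field; lra). lra.
Qed.

Lemma ln_sub_ge x y : 0 < x -> 0 < y -> (y - x) / y <= ln y - ln x.
Proof.
  intros Hx Hy. pose proof (ln_sub_le y x Hy Hx).
  replace ((y - x) / y) with (- ((x - y) / y)) by (field; lra). lra.
Qed.

(* Tangent line of the convex function [s |-> exp (p s)] at [s = ln x]. *)
Lemma Rpower_sub_ge x y p : Rpower x p * (p * (ln y - ln x)) <= Rpower y p - Rpower x p.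
Proof.
  unfold Rpower. pose proof (exp_ineq1_le (p * ln y - p * ln x)).
  replace (exp (p * ln y)) with (exp (p * ln x) * exp (p * ln y - p * ln x))
    by (rewrite <- exp_plus; f_equal; ring).
  pose proof (exp_pos (p * ln x)). nra.
Qed.

Lemma Rpower_le_of_ratio x y c p : 0 < x -> 0 < y -> x <= c * y -> y <= c * x ->
  Rpower x p <= Rpower c (Rabs p) * Rpower y p.
Proof.
  intros Hx Hy Hxy Hyx.
  assert (Hc : 0 < c) by nra.
  assert (Hlx : ln x <= ln c + ln y) by (rewrite <- ln_mult by lra; apply ln_le; lra).
  assert (Hly : ln y <= ln c + ln x) by (rewrite <- ln_mult by lra; apply ln_le; lra).
  unfold Rpower. rewrite <- exp_plus. apply exp_le_compat.
  destruct (Rle_or_lt 0 p); [rewrite Rabs_right | rewrite Rabs_left]; nra.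
Qed.

Lemma Rpower_unbounded e : 0 < e -> forall B, exists n, (1 <= n)%nat /\ B < Rpower (INR n) e.
Proof.
  intros He B. set (x := Rmax 1 B).
  destruct (INR_unbounded (Rpower x (/ e))) as [n Hn].
  pose proof (Rpower_pos x (/ e)).
  assert (Hn1 : (1 <= n)%nat) by (destruct n; simpl in Hn; [lra | lia]).
  exists n. split; [exact Hn1 |].
  apply Rle_lt_trans with x; [apply Rmax_r |].
  replace x with (Rpower (Rpower x (/ e)) e)
    by (rewrite Rpower_mult, Rinv_l, Rpower_1 by (unfold x; pose proof (Rmax_l 1 B); lra);
        reflexivity).
  apply Rlt_Rpower_l; lra.
Qed.

Lemma ln_unbounded B : exists N, B < ln (INR (S (S N))).
Proof.
  destruct (INR_unbounded (exp B)) as [N HN]. exists N.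
  rewrite <- (ln_exp B). apply ln_increasing; [apply exp_pos |].
  rewrite !S_INR. lra.
Qed.

Lemma INR_ge_1 m : (1 <= m)%nat -> 1 <= INR m.
Proof. intros Hm. apply (le_INR 1 m Hm). Qed.

Lemma INR_pos m : (1 <= m)%nat -> 0 < INR m.
Proof. intros Hm. pose proof (INR_ge_1 m Hm). lra. Qed.

Lemma ln_succ_sub_ge m : (1 <= m)%nat -> / INR (S m) <= ln (INR (S m)) - ln (INR m).
Proof.
  intros Hm. pose proof (INR_pos m Hm).
  eapply Rle_trans; [| apply ln_sub_ge; rewrite ?S_INR; lra].
  rewrite S_INR. right. field. lra.
Qed.

Lemma ln_succ_sub_le m : (1 <= m)%nat -> ln (INR (S m)) - ln (INR m) <= / INR m.
Proof.
  intros Hm. pose proof (INR_pos m Hm).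
  eapply Rle_trans; [apply ln_sub_le; rewrite ?S_INR; lra |].
  rewrite S_INR. right. field. lra.
Qed.

Lemma sum_n_succ (u : nat -> R) N : sum_n u (S N) = sum_n u N + u (S N).
Proof. rewrite sum_Sn. reflexivity. Qed.

Lemma sum_n_le (u v : nat -> R) N :
  (forall k, (k <= N)%nat -> u k <= v k) -> sum_n u N <= sum_n v N.
Proof. intros H. rewrite !sum_n_Reals. apply sum_Rle, H. Qed.

Lemma sum_n_nonneg (u : nat -> R) N : (forall k, 0 <= u k) -> 0 <= sum_n u N.
Proof. intros H. rewrite sum_n_Reals. apply cond_pos_sum, H. Qed.

Lemma sum_n_split (u : nat -> R) p j :
  sum_n u (p + S j) = sum_n u p + sum_n (fun k => u (S (p + k))) j.
Proof.
  induction j as [| j IH].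
  - rewrite sum_O, Nat.add_1_r, Nat.add_0_r. apply sum_n_succ.
  - rewrite Nat.add_succ_r, !sum_n_succ, IH, Nat.add_succ_r.
    apply Rplus_assoc.
Qed.

Lemma sum_n_nonneg_mono (u : nat -> R) N M :
  (forall k, 0 <= u k) -> (N <= M)%nat -> sum_n u N <= sum_n u M.
Proof.
  intros Hu HNM. induction HNM as [| M _ IH]; [lra |].
  rewrite sum_n_succ. specialize (Hu (S M)). lra.
Qed.

Lemma sum_n_le_Series (u : nat -> R) N :
  (forall k, 0 <= u k) -> ex_series u -> sum_n u N <= Series u.
Proof.
  intros Hu Hex. apply (is_lim_seq_incr_compare (sum_n u)); [apply Series_correct, Hex |].
  intros M. apply sum_n_nonneg_mono; [exact Hu | lia].
Qed.

Lemma Series_nonneg_bounded (u : nat -> R) C :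
  (forall k, 0 <= u k) -> (forall N, sum_n u N <= C) -> ex_series u /\ Series u <= C.
Proof.
  intros Hu HC.
  assert (Hincr : forall N, sum_n u N <= sum_n u (S N))
    by (intros; apply sum_n_nonneg_mono; [exact Hu | lia]).
  destruct (ex_finite_lim_seq_incr (sum_n u) C Hincr HC) as [l Hl].
  assert (Hs : is_series u l) by exact Hl.
  split; [exists l; exact Hs |].
  rewrite (is_series_unique u l Hs).
  apply (is_lim_seq_le (sum_n u) (fun _ => C) l C HC Hl (is_lim_seq_const C)).
Qed.

Lemma Rpower_succ_step_pos q m : 0 < q -> (1 <= m)%nat ->
  Rpower (INR (S m)) (q - 1) <= Rpower 2 q / q * (Rpower (INR (S m)) q - Rpower (INR m) q).
Proof.
  intros Hq Hm. pose proof (INR_ge_1 m Hm) as Hx.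
  assert (Hy : 0 < INR (S m)) by (apply INR_pos; lia).
  pose proof (Rpower_sub_ge (INR m) (INR (S m)) q) as Htangent.
  pose proof (ln_succ_sub_ge m Hm) as Hln.
  assert (Hratio : Rpower (INR (S m)) q <= Rpower 2 q * Rpower (INR m) q).
  { rewrite <- (Rabs_right q) at 2 by lra.
    apply Rpower_le_of_ratio; rewrite ?S_INR in *; lra. }
  set (A := Rpower (INR m) q) in *. set (B := Rpower (INR (S m)) q) in *.
  set (W := Rpower 2 q) in *.
  assert (HA : 0 < A) by apply Rpower_pos. assert (HW : 0 < W) by apply Rpower_pos.
  assert (Hstep : A * q / INR (S m) <= B - A).
  { eapply Rle_trans; [| exact Htangent]. unfold Rdiv.
    rewrite Rmult_assoc. apply Rmult_le_compat_l; [lra |]. apply Rmult_le_compat_l; lra. }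
  rewrite Rpower_sub_1 by exact Hy. fold B.
  apply Rle_trans with (W * A / INR (S m)).
  - unfold Rdiv. apply Rmult_le_compat_r; [left; apply Rinv_0_lt_compat |]; lra.
  - replace (W * A / INR (S m)) with (W / q * (A * q / INR (S m))) by (field; lra).
    apply Rmult_le_compat_l; [apply Rlt_le, Rdiv_lt_0_compat |]; lra.
Qed.

Lemma Rpower_succ_step_neg r m : 0 < r -> (1 <= m)%nat ->
  Rpower (INR (S m)) (- r - 1) <= (Rpower (INR m) (- r) - Rpower (INR (S m)) (- r)) / r.
Proof.
  intros Hr Hm. pose proof (INR_pos m Hm) as Hx.
  assert (Hy : 0 < INR (S m)) by (apply INR_pos; lia).
  pose proof (Rpower_sub_ge (INR (S m)) (INR m) (- r)) as Htangent.
  pose proof (ln_succ_sub_ge m Hm) as Hln.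
  set (A := Rpower (INR (S m)) (- r)) in *. set (B := Rpower (INR m) (- r)) in *.
  assert (HA : 0 < A) by apply Rpower_pos.
  assert (Hstep : A * r / INR (S m) <= B - A).
  { eapply Rle_trans; [| exact Htangent].
    replace (- r * (ln (INR m) - ln (INR (S m)))) with (r * (ln (INR (S m)) - ln (INR m))) by ring.
    unfold Rdiv. rewrite Rmult_assoc. apply Rmult_le_compat_l; [lra |].
    apply Rmult_le_compat_l; lra. }
  rewrite Rpower_sub_1 by exact Hy. fold A.
  apply (Rmult_le_reg_l r); [exact Hr |].
  replace (r * ((B - A) / r)) with (B - A) by (field; lra).
  replace (r * (A / INR (S m))) with (A * r / INR (S m)) by (field; lra).
  exact Hstep.
Qed.

Lemma sum_Rpower_le q N : 0 < q ->
  sum_n (fun k => Rpower (INR (S k)) (q - 1)) N <= (1 + Rpower 2 q / q) * Rpower (INR (S N)) q.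
Proof.
  intros Hq.
  assert (Hc : 0 < Rpower 2 q / q) by (apply Rdiv_lt_0_compat; [apply Rpower_pos | lra]).
  assert (Htel : sum_n (fun k => Rpower (INR (S k)) (q - 1)) N
                 <= 1 + Rpower 2 q / q * (Rpower (INR (S N)) q - 1)).
  { induction N as [| N IH].
    - rewrite sum_O. replace (INR 1) with 1 by reflexivity. rewrite !Rpower_1_base. lra.
    - rewrite sum_n_succ. pose proof (Rpower_succ_step_pos q (S N) Hq ltac:(lia)). lra. }
  assert (H1 : 1 <= Rpower (INR (S N)) q).
  { rewrite <- (Rpower_1_base q). apply Rle_Rpower_l; [lra |].
    rewrite S_INR. pose proof (pos_INR N). lra. }
  nra.
Qed.

Lemma sum_Rpower_tail_le r n j : 0 < r -> (1 <= n)%nat ->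
  sum_n (fun k => Rpower (INR (S (n + k))) (- r - 1)) j <= Rpower (INR n) (- r) / r.
Proof.
  intros Hr Hn.
  assert (Htel : sum_n (fun k => Rpower (INR (S (n + k))) (- r - 1)) j
                 <= (Rpower (INR n) (- r) - Rpower (INR (S (n + j))) (- r)) / r).
  { induction j as [| j IH].
    - rewrite sum_O, Nat.add_0_r. apply Rpower_succ_step_neg; assumption.
    - rewrite sum_n_succ, Nat.add_succ_r.
      pose proof (Rpower_succ_step_neg r (S (n + j)) Hr ltac:(lia)).
      replace ((Rpower (INR n) (- r) - Rpower (INR (S (S (n + j)))) (- r)) / r) with
        ((Rpower (INR n) (- r) - Rpower (INR (S (n + j))) (- r)) / r
         + (Rpower (INR (S (n + j))) (- r) - Rpower (INR (S (S (n + j)))) (- r)) / r)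
        by (field; lra).
      lra. }
  eapply Rle_trans; [exact Htel |]. unfold Rdiv.
  apply Rmult_le_compat_r; [left; apply Rinv_0_lt_compat; exact Hr |].
  pose proof (Rpower_pos (INR (S (n + j))) (- r)). lra.
Qed.

Lemma ln_le_harmonic N : ln (INR (S (S N))) <= sum_n (fun k => / INR (S k)) N.
Proof.
  induction N as [| N IH].
  - rewrite sum_O. pose proof (ln_succ_sub_le 1 (le_n 1)).
    replace (INR 1) with 1 in * by reflexivity. rewrite ln_1 in *. lra.
  - rewrite sum_n_succ. pose proof (ln_succ_sub_le (S (S N)) ltac:(lia)). lra.
Qed.

Lemma Hkernel_pos lambda mu nu m n : 0 < Hkernel lambda mu nu m n.
Proof.
  unfold Hkernel. apply Rdiv_lt_0_compat; [apply Rmult_lt_0_compat |]; apply Rpower_pos.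
Qed.

Lemma Hkernel_le_head lambda mu nu m n : 0 <= lambda -> (1 <= n)%nat ->
  Hkernel lambda mu nu m n <= Rpower (INR n) (nu - lambda) * Rpower (INR m) mu.
Proof.
  intros Hl Hn. pose proof (INR_pos n Hn).
  assert (Hle : Rpower (INR n) lambda <= Rpower (INR (m + n)) lambda).
  { apply Rle_Rpower_l; [exact Hl |]. rewrite plus_INR. pose proof (pos_INR m). lra. }
  pose proof (Rpower_pos (INR n) lambda).
  unfold Hkernel. rewrite Rpower_sub.
  replace (Rpower (INR n) nu / Rpower (INR n) lambda * Rpower (INR m) mu)
    with (Rpower (INR m) mu * Rpower (INR n) nu / Rpower (INR n) lambda) by (field; lra).
  unfold Rdiv. apply Rmult_le_compat_l.
  - apply Rmult_le_pos; left; apply Rpower_pos.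
  - apply Rinv_le_contravar; assumption.
Qed.

Lemma Hkernel_le_tail lambda mu nu m n : 0 <= lambda -> (1 <= m)%nat ->
  Hkernel lambda mu nu m n <= Rpower (INR n) nu * Rpower (INR m) (mu - lambda).
Proof.
  intros Hl Hm. pose proof (INR_pos m Hm).
  assert (Hle : Rpower (INR m) lambda <= Rpower (INR (m + n)) lambda).
  { apply Rle_Rpower_l; [exact Hl |]. rewrite plus_INR. pose proof (pos_INR n). lra. }
  pose proof (Rpower_pos (INR m) lambda).
  unfold Hkernel. rewrite Rpower_sub.
  replace (Rpower (INR n) nu * (Rpower (INR m) mu / Rpower (INR m) lambda))
    with (Rpower (INR m) mu * Rpower (INR n) nu / Rpower (INR m) lambda) by (field; lra).
  unfold Rdiv. apply Rmult_le_compat_l.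
  - apply Rmult_le_pos; left; apply Rpower_pos.
  - apply Rinv_le_contravar; assumption.
Qed.

Lemma Hkernel_ge_near_diagonal lambda mu nu m n : (1 <= n)%nat -> (n <= m <= 2 * n)%nat ->
  Rpower (INR n) (mu + nu - lambda) / (Rpower 2 (Rabs mu) * Rpower 3 (Rabs lambda))
  <= Hkernel lambda mu nu m n.
Proof.
  intros Hn [Hnm Hm2n]. pose proof (INR_pos n Hn) as HnR.
  apply le_INR in Hnm. apply le_INR in Hm2n. rewrite mult_INR in Hm2n. simpl (INR 2) in Hm2n.
  assert (Hmu : Rpower (INR n) mu <= Rpower 2 (Rabs mu) * Rpower (INR m) mu)
    by (apply Rpower_le_of_ratio; lra).
  assert (Hlambda : Rpower (INR (m + n)) lambda <= Rpower 3 (Rabs lambda) * Rpower (INR n) lambda)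
    by (apply Rpower_le_of_ratio; rewrite ?plus_INR; lra).
  unfold Hkernel. rewrite Rpower_sub, Rpower_plus.
  set (A := Rpower (INR m) mu) in *. set (N := Rpower (INR n) mu) in *.
  set (V := Rpower (INR n) nu). set (L := Rpower (INR n) lambda) in *.
  set (D := Rpower (INR (m + n)) lambda) in *.
  set (W := Rpower 2 (Rabs mu)) in *. set (T := Rpower 3 (Rabs lambda)) in *.
  assert (0 < A) by apply Rpower_pos. assert (0 < V) by apply Rpower_pos.
  assert (0 < L) by apply Rpower_pos. assert (0 < D) by apply Rpower_pos.
  assert (0 < W) by apply Rpower_pos. assert (0 < T) by apply Rpower_pos.
  replace (N * V / L / (W * T)) with ((N / W) * V / (T * L)) by (field; lra).
  unfold Rdiv. apply Rmult_le_compat.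
  - apply Rmult_le_pos; [apply Rmult_le_pos |]; left;
      [apply Rpower_pos | apply Rinv_0_lt_compat |]; lra.
  - left; apply Rinv_0_lt_compat; nra.
  - apply Rmult_le_compat_r; [lra |].
    apply (Rmult_le_reg_l W); [lra |]. replace (W * (N * / W)) with N by (field; lra). lra.
  - apply Rinv_le_contravar; lra.
Qed.

Lemma Hkernel_ge_first_row lambda mu nu k : 0 < mu + 1 -> lambda <= mu + 1 ->
  / Rpower 2 (mu + 1) * / INR (S k) <= Hkernel lambda mu nu (S k) 1.
Proof.
  intros Hmu Hl. pose proof (INR_ge_1 (S k) ltac:(lia)) as Hk.
  assert (Hk2 : INR (S k + 1) = INR (S k) + 1) by (rewrite plus_INR; reflexivity).
  assert (Hexp : Rpower (INR (S k + 1)) lambda <= Rpower (INR (S k + 1)) (mu + 1))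
    by (apply Rle_Rpower; [rewrite Hk2 |]; lra).
  assert (Hratio : Rpower (INR (S k + 1)) (mu + 1)
                   <= Rpower 2 (mu + 1) * Rpower (INR (S k)) (mu + 1)).
  { rewrite <- (Rabs_right (mu + 1)) at 2 by lra. apply Rpower_le_of_ratio; rewrite ?Hk2; lra. }
  unfold Hkernel. replace (INR 1) with 1 by reflexivity. rewrite Rpower_1_base, Rmult_1_r.
  rewrite (Rpower_plus mu 1 (INR (S k))), (Rpower_1 (INR (S k))) in Hratio by lra.
  set (A := Rpower (INR (S k)) mu) in *. set (W := Rpower 2 (mu + 1)) in *.
  assert (0 < A) by apply Rpower_pos. assert (0 < W) by apply Rpower_pos.
  pose proof (Rpower_pos (INR (S k + 1)) lambda).
  replace (/ W * / INR (S k)) with (A / (W * (A * INR (S k)))) by (field; lra).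
  unfold Rdiv. apply Rmult_le_compat_l; [lra |]. apply Rinv_le_contravar; lra.
Qed.

Definition row_sum (lambda mu nu : R) (n N : nat) : R :=
  sum_n (fun k => Hkernel lambda mu nu (S k) n) N.

Definition row_sums_bounded (lambda mu nu : R) : Prop :=
  exists C, forall n N, (1 <= n)%nat -> row_sum lambda mu nu n N <= C.

Lemma H_bounded_linf_iff_row_sums_bounded lambda mu nu :
  H_bounded_linf lambda mu nu <-> row_sums_bounded lambda mu nu.
Proof.
  set (t n k := Hkernel lambda mu nu (S k) n).
  assert (Ht : forall n k, 0 <= t n k) by (intros; left; apply Hkernel_pos).
  split.
  - intros [C HC]. exists C. intros n N Hn.
    destruct (HC (fun _ => 1) 1 ltac:(intros; cbv beta; rewrite Rabs_R1; lra) n Hn) as [Hex Hle].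
    assert (Hterm1 : forall k, Hterm lambda mu nu (fun _ => 1) n k = t n k)
      by (intros; unfold Hterm, t; ring).
    rewrite Rmult_1_r in Hle. unfold row_sum. fold (t n).
    rewrite <- (sum_n_ext _ _ N Hterm1).
    eapply Rle_trans; [| exact (Rle_trans _ _ _ (Rle_abs _) Hle)].
    apply sum_n_le_Series; [intros k; rewrite Hterm1; apply Ht | exact Hex].
  - intros [C HC]. exists C. intros a M Ha n Hn.
    destruct (Series_nonneg_bounded (t n) C (Ht n) (fun N => HC n N Hn)) as [Hex Hle].
    assert (HM : 0 <= M) by (pose proof (Ha 1%nat (le_n 1)); pose proof (Rabs_pos (a 1%nat)); lra).
    assert (Hdom : forall k, Rabs (Hterm lambda mu nu a n k) <= t n k * M).
    { intros k. unfold Hterm. rewrite Rabs_mult, Rabs_right by (apply Rle_ge, Ht).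
      apply Rmult_le_compat_l; [apply Ht | apply Ha; lia]. }
    assert (HexM : ex_series (fun k => t n k * M)) by (apply ex_series_scal_r, Hex).
    assert (Hexabs : ex_series (fun k => Rabs (Hterm lambda mu nu a n k))).
    { apply (@ex_series_le R_AbsRing R_CompleteNormedModule _ (fun k => t n k * M)); [| exact HexM].
      intros k. change (Rabs (Rabs (Hterm lambda mu nu a n k)) <= t n k * M).
      rewrite Rabs_Rabsolu. apply Hdom. }
    split; [apply ex_series_Rabs, Hexabs |].
    eapply Rle_trans; [apply Series_Rabs, Hexabs |].
    eapply Rle_trans.
    { apply (Series_le _ (fun k => t n k * M)); [| exact HexM].
      intros k. split; [apply Rabs_pos | apply Hdom]. }
    rewrite Series_scal_r. apply Rmult_le_compat_r; assumption.
Qed.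

Lemma row_sum_le lambda mu nu n N : -1 < mu -> mu + 1 < lambda -> mu + nu + 1 <= lambda ->
  (1 <= n)%nat ->
  row_sum lambda mu nu n N <= 1 + Rpower 2 (mu + 1) / (mu + 1) + / (lambda - mu - 1).
Proof.
  intros Hmu Hl Hexp Hn.
  set (q := mu + 1). set (r := lambda - mu - 1). set (c1 := 1 + Rpower 2 q / q).
  set (e := mu + nu + 1 - lambda).
  assert (Hq : 0 < q) by (unfold q; lra). assert (Hr : 0 < r) by (unfold r; lra).
  set (t k := Hkernel lambda mu nu (S k) n).
  assert (Ht : forall k, 0 <= t k) by (intros; left; apply Hkernel_pos).
  destruct n as [| p]; [lia |].
  assert (Hhead : sum_n t p <= c1 * Rpower (INR (S p)) e).
  { apply Rle_trans with
      (sum_n (fun k => Rpower (INR (S p)) (nu - lambda) * Rpower (INR (S k)) (q - 1)) p).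
    - apply sum_n_le. intros k _. unfold t, q. replace (mu + 1 - 1) with mu by ring.
      apply Hkernel_le_head; [lra | lia].
    - rewrite (sum_n_mult_l (K := R_Ring)). change mult with Rmult.
      replace e with (nu - lambda + q) by (unfold e, q; ring). rewrite Rpower_plus.
      pose proof (sum_Rpower_le q p Hq) as Hsum. fold c1 in Hsum.
      replace (c1 * (Rpower (INR (S p)) (nu - lambda) * Rpower (INR (S p)) q))
        with (Rpower (INR (S p)) (nu - lambda) * (c1 * Rpower (INR (S p)) q)) by ring.
      apply Rmult_le_compat_l; [left; apply Rpower_pos | exact Hsum]. }
  assert (Htail : sum_n (fun k => t (S (p + k))) N <= / r * Rpower (INR (S p)) e).
  { apply Rle_trans with
      (sum_n (fun k => Rpower (INR (S p)) nu * Rpower (INR (S (S p + k))) (- r - 1)) N).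
    - apply sum_n_le. intros k _. unfold t, r.
      replace (- (lambda - mu - 1) - 1) with (mu - lambda) by ring.
      apply Hkernel_le_tail; [lra | lia].
    - rewrite (sum_n_mult_l (K := R_Ring)). change mult with Rmult.
      replace e with (nu + - r) by (unfold e, r; ring). rewrite Rpower_plus.
      pose proof (sum_Rpower_tail_le r (S p) N Hr ltac:(lia)) as Hsum.
      replace (/ r * (Rpower (INR (S p)) nu * Rpower (INR (S p)) (- r)))
        with (Rpower (INR (S p)) nu * (Rpower (INR (S p)) (- r) / r)) by (field; lra).
      apply Rmult_le_compat_l; [left; apply Rpower_pos | exact Hsum]. }
  assert (He : Rpower (INR (S p)) e <= 1)
    by (apply Rpower_le_1; [apply INR_ge_1; lia | unfold e; lra]).
  assert (Hc1 : 0 < c1) by (unfold c1; pose proof (Rdiv_lt_0_compat _ _ (Rpower_pos 2 q) Hq); lra).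
  pose proof (Rinv_0_lt_compat r Hr).
  unfold row_sum. fold t.
  eapply Rle_trans; [apply (sum_n_nonneg_mono t N (p + S N) Ht); lia |].
  rewrite sum_n_split. nra.
Qed.

Lemma row_sums_bounded_lambda_gt lambda mu nu : -1 < mu -> row_sums_bounded lambda mu nu ->
  mu + 1 < lambda.
Proof.
  intros Hmu [C HC]. destruct (Rlt_or_le (mu + 1) lambda) as [| Hl]; [assumption | exfalso].
  set (W := Rpower 2 (mu + 1)). assert (HW : 0 < W) by apply Rpower_pos.
  destruct (ln_unbounded (W * C)) as [N HN].
  assert (Hharm : / W * ln (INR (S (S N))) <= row_sum lambda mu nu 1 N).
  { apply Rle_trans with (/ W * sum_n (fun k => / INR (S k)) N).
    - apply Rmult_le_compat_l; [left; apply Rinv_0_lt_compat, HW | apply ln_le_harmonic].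
    - rewrite <- (sum_n_mult_l (K := R_Ring)). apply sum_n_le. intros k _.
      apply Hkernel_ge_first_row; lra. }
  specialize (HC 1%nat N (le_n 1)).
  apply (Rmult_lt_compat_l (/ W)) in HN; [| apply Rinv_0_lt_compat, HW].
  replace (/ W * (W * C)) with C in HN by (field; lra). lra.
Qed.

Lemma row_sums_bounded_exponent_le lambda mu nu : row_sums_bounded lambda mu nu ->
  mu + nu + 1 <= lambda.
Proof.
  intros [C HC]. destruct (Rle_or_lt (mu + nu + 1) lambda) as [| Hl]; [assumption | exfalso].
  set (c0 := / (Rpower 2 (Rabs mu) * Rpower 3 (Rabs lambda))).
  assert (Hc0 : 0 < c0)
    by (apply Rinv_0_lt_compat, Rmult_lt_0_compat; apply Rpower_pos).
  destruct (Rpower_unbounded (mu + nu + 1 - lambda) ltac:(lra) (C / c0)) as [[| p] [Hn HB]];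
    [lia |].
  set (t k := Hkernel lambda mu nu (S k) (S p)).
  assert (Hdiag : c0 * Rpower (INR (S p)) (mu + nu + 1 - lambda)
                  <= row_sum lambda mu nu (S p) (p + S p)).
  { unfold row_sum. fold t. rewrite sum_n_split.
    assert (Hhead : 0 <= sum_n t p) by (apply sum_n_nonneg; intros; left; apply Hkernel_pos).
    enough (c0 * Rpower (INR (S p)) (mu + nu + 1 - lambda)
            <= sum_n (fun k => t (S (p + k))) p) by lra.
    apply Rle_trans with (sum_n (fun _ => Rpower (INR (S p)) (mu + nu - lambda) * c0) p).
    - rewrite sum_n_const.
      replace (mu + nu - lambda) with (mu + nu + 1 - lambda - 1) by ring.
      rewrite Rpower_sub_1 by (apply INR_pos; lia). right. field. apply not_0_INR. lia.
    - apply sum_n_le. intros k Hk. unfold t.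
      apply Hkernel_ge_near_diagonal; lia. }
  specialize (HC (S p) (p + S p)%nat Hn).
  apply (Rmult_lt_compat_l c0) in HB; [| exact Hc0].
  replace (c0 * (C / c0)) with C in HB by (field; lra). lra.
Qed.

Theorem theorem1p9 (lambda mu nu : R) (hmu : -1 < mu) :
  H_bounded_linf lambda mu nu <-> (lambda >= mu + nu + 1 /\ lambda > mu + 1).
Proof.
  rewrite H_bounded_linf_iff_row_sums_bounded. split.
  - intros Hrow. split.
    + apply Rle_ge, (row_sums_bounded_exponent_le _ _ _ Hrow).
    + apply (row_sums_bounded_lambda_gt _ _ _ hmu Hrow).
  - intros [Hexp Hl]. eexists. intros n N Hn.
    apply row_sum_le; [exact hmu | exact Hl | apply Rge_le, Hexp | exact Hn].
Qed.
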